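(* Let $m$ be a positive integer and define $\zeta^m(s,t):=\sum_{n=1}^\infty Z^m_n(s)\,n^{-t}$. Then for $\operatorname{Re}s>0$ and $\operatorname{Re}t>1$, $$\zeta^m(s,t)=\prod_{k=0}^m\zeta(sk+t).$$
   Context: For positive integers $m,N$, $Z^{m}_N(s):=\sum_{n_1|n_2|\cdots|n_m|N}(n_1n_2\cdots n_m)^{-s}$, the sum over all $m$-tuples of positive integers with $n_1\mid n_2\mid\cdots\mid n_m\mid N$. $\zeta$ is the Riemann zeta function. *)

From Stdlib Require Import Reals.
From Coquelicot Require Import Coquelicot.
From mathcomp Require Import ssreflect ssrbool ssrnat seq prime.

Open Scope R_scope.

(* n ^ w for a positive integer n and complex w:  exp (w * ln n). *)
Definition cpow_nat (n : nat) (w : C) : C :=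
  (Rpower (INR n) (Re w) * cos (Im w * ln (INR n)),
   Rpower (INR n) (Re w) * sin (Im w * ln (INR n))).

(* Z^m_N(s) = sum over n_1 | n_2 | ... | n_m | N of (n_1 ... n_m)^(-s),
   computed by summing over the largest index n_m | N:
   Z^0_N(s) = 1,  Z^(m+1)_N(s) = sum_{d | N} d^(-s) * Z^m_d(s). *)
Fixpoint Zchain (m : nat) (N : nat) (s : C) : C :=
  match m with
  | 0 => RtoC 1
  | m'.+1 => foldr (fun d acc => Cplus (Cmult (cpow_nat d (Copp s)) (Zchain m' d s)) acc)
                   (RtoC 0) (divisors N)
  end.

(* Riemann zeta function via its Dirichlet series (used only for Re w > 1). *)
Definition zeta (w : C) : C :=
  (Series (fun n : nat => Re (cpow_nat n.+1 (Copp w))),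
   Series (fun n : nat => Im (cpow_nat n.+1 (Copp w)))).

(* Dirichlet series zeta^m(s,t) = sum_{n>=1} Z^m_n(s) n^(-t); term for index n is n+1. *)
Definition zeta_m_term (m : nat) (s t : C) (n : nat) : C :=
  Cmult (Zchain m n.+1 s) (cpow_nat n.+1 (Copp t)).

Definition zeta_prod (m : nat) (s t : C) : C :=
  foldr (fun k acc => Cmult (zeta (Cplus (Cmult s (RtoC (INR k))) t)) acc)
        (RtoC 1) (iota 0 m.+1).

(** The recursion [Z^(m+1)_n(s) = sum_(d | n) d^-s Z^m_d(s)] says that the
    coefficients of [zeta^(m+1)(s,t)] are the Dirichlet convolution of the
    coefficients [Z^m_d(s) d^-(s+t)] of [zeta^m(s, s+t)] with the coefficients
    [e^-t] of [zeta(t)].  Since both series converge absolutely for [Re t > 1]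
    and [Re s > 0], so does their Dirichlet product and its sum is the product
    of the sums; hence [zeta^(m+1)(s,t) = zeta(t) zeta^m(s,s+t)], and induction
    on [m] (starting from [zeta^0(s,t) = zeta(t)]) gives the product formula.
    The analytic input is the absolute convergence of [sum n^-p] for [p > 1]
    and the estimate of the Dirichlet product of two partial sums against the
    product of the partial sums: the terms [a_d b_e] with [d e > M] that the
    former misses lie outside the square [[1, K]^2] when [K^2 <= M]. *)

From Stdlib Require Import Reals Lra.
From Coquelicot Require Import Coquelicot.
From HB Require Import structures.
From mathcomp Require Import all_boot all_order all_algebra Rstruct.

Open Scope R_scope.

Lemma cpow_natD n w1 w2 :
  cpow_nat n (Cplus w1 w2) = Cmult (cpow_nat n w1) (cpow_nat n w2).
Proof.
rewrite /cpow_nat /Cmult /Re /Im /= Rpower_plus Rmult_plus_distr_r cos_plus sin_plus.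
f_equal; ring.
Qed.

Lemma cpow_natM d e w : (0 < d)%N -> (0 < e)%N ->
  cpow_nat (d * e) w = Cmult (cpow_nat d w) (cpow_nat e w).
Proof.
move=> d0 e0.
have d0' : 0 < INR d by apply: lt_0_INR; apply/ltP.
have e0' : 0 < INR e by apply: lt_0_INR; apply/ltP.
rewrite /cpow_nat /Cmult /Re /Im /= mult_INR ln_mult // -Rpower_mult_distr //.
rewrite Rmult_plus_distr_l cos_plus sin_plus.
f_equal; ring.
Qed.

Lemma Cmod_cpow_nat n w : Cmod (cpow_nat n w) = Rpower (INR n) (Re w).
Proof.
rewrite /cpow_nat /Cmod /=.
set P := Rpower _ _; set c := cos _; set s := sin _.
have -> : (P * c) ^ 2 + (P * s) ^ 2 = P ^ 2 * (Rsqr s + Rsqr c) by rewrite /Rsqr; ring.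
rewrite sin2_cos2 Rmult_1_r sqrt_pow2 //.
exact: Rlt_le (exp_pos _).
Qed.

Lemma ln_succ_sub_ge x : 0 < x -> / (x + 1) <= ln (x + 1) - ln x.
Proof.
move=> x0.
have := exp_ineq1_le (ln (x / (x + 1))).
rewrite exp_ln; last by apply: Rdiv_lt_0_compat; lra.
rewrite ln_div; [|lra|lra].
have -> : x / (x + 1) = 1 - / (x + 1) by field; lra.
lra.
Qed.

(* The right-hand side is [int_x^(x+1) u^-(q+1) du], which bounds the integrand at [x+1]. *)
Lemma Rpower_succ_le x q : 0 < x -> 0 < q ->
  Rpower (x + 1) (- (q + 1)) <= / q * (Rpower x (- q) - Rpower (x + 1) (- q)).
Proof.
move=> x0 q0; rewrite /Rpower.
set a := ln (x + 1); set b := ln x.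
have ab : / (x + 1) <= a - b by exact: ln_succ_sub_ge.
have -> : exp (- (q + 1) * a) = exp (- q * a) * / (x + 1).
  by rewrite -(exp_ln (x + 1)); [rewrite -exp_Ropp -exp_plus -/a; f_equal; ring | lra].
have -> : exp (- q * b) = exp (- q * a) * exp (q * (a - b)).
  by rewrite -exp_plus; f_equal; ring.
set v := exp (- q * a); set E := exp (q * (a - b)).
have convex : 1 + q * (a - b) <= E by exact: exp_ineq1_le.
have v0 : 0 < v by exact: exp_pos.
have -> : / q * (v * E - v) = v * (a - b) + / q * v * (E - (1 + q * (a - b))).
  by field; lra.
have : v * / (x + 1) <= v * (a - b) by apply: Rmult_le_compat_l; lra.
have : 0 <= / q * v * (E - (1 + q * (a - b))).
  apply: Rmult_le_pos; last lra.
  by apply: Rmult_le_pos; [apply: Rlt_le; apply: Rinv_0_lt_compat | lra].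
lra.
Qed.

Lemma sum_n_le_Series (f : nat -> R) N :
  (forall n, 0 <= f n) -> ex_series f -> sum_n f N <= Series f.
Proof.
move=> f0 /Series_correct lim_f.
apply: (is_lim_seq_incr_compare _ _ lim_f) => n.
rewrite sum_Sn; change plus with Rplus; have := f0 n.+1; lra.
Qed.

Lemma ex_series_nonneg_bounded (f : nat -> R) M :
  (forall n, 0 <= f n) -> (forall N, sum_n f N <= M) -> ex_series f.
Proof.
move=> f0 fM.
have [l lim_f] : ex_finite_lim_seq (sum_n f).
  apply: (ex_finite_lim_seq_incr _ M) => // n.
  rewrite sum_Sn; change plus with Rplus; have := f0 n.+1; lra.
by exists l.
Qed.

Lemma ex_series_Rpower_nat p : 1 < p -> ex_series (fun n => Rpower (INR n.+1) (- p)).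
Proof.
move=> p1; set q := p - 1.
have q0 : 0 < q by rewrite /q; lra.
set g := fun n : nat => Rpower (INR n.+1) (- q).
have g0 n : 0 <= g n by exact: Rlt_le (exp_pos _).
have step n : Rpower (INR n.+2) (- p) <= / q * (g n - g n.+1).
  rewrite /g (S_INR n.+1) (_ : - p = - (q + 1)); last by rewrite /q; ring.
  by apply: Rpower_succ_le => //; apply: lt_0_INR; apply/ltP.
have partial N : sum_n (fun n => Rpower (INR n.+1) (- p)) N
                 <= Rpower (INR 1) (- p) + / q * (g 0%N - g N).
  elim: N => [|N IH]; first by rewrite sum_O; lra.
  rewrite sum_Sn; change plus with Rplus; have := step N; lra.
apply: (ex_series_nonneg_bounded _ (Rpower (INR 1) (- p) + / q * g 0%N)).
  by move=> n; exact: Rlt_le (exp_pos _).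
move=> N; apply: Rle_trans (partial N) _.
have : 0 <= / q * g N by apply: Rmult_le_pos; [apply: Rlt_le; apply: Rinv_0_lt_compat|].
lra.
Qed.

Lemma is_series_Re_Im (f : nat -> C) (l : C) : is_series f l ->
  is_series (fun n => Re (f n)) (Re l) /\ is_series (fun n => Im (f n)) (Im l).
Proof.
have sum_n_Re N : Re (sum_n f N) = sum_n (fun n => Re (f n)) N.
  by elim: N => [|N IH]; rewrite ?sum_O // !sum_Sn -IH.
have sum_n_Im N : Im (sum_n f N) = sum_n (fun n => Im (f n)) N.
  by elim: N => [|N IH]; rewrite ?sum_O // !sum_Sn -IH.
move=> /filterlim_locally lim_f; split; apply/filterlim_locally => eps;
  apply: filter_imp (lim_f eps) => N [ballRe ballIm].
- by rewrite -sum_n_Re.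
- by rewrite -sum_n_Im.
Qed.

(* [C] carries two uniform structures, with product balls and with [Cmod]
   balls; Coquelicot's [filterlim_mult] is stated for the latter. *)
Lemma filterlim_C_AbsRing (T : Type) (F : (T -> Prop) -> Prop) (f : T -> C) (l : C) :
  filterlim f F (@locally C_UniformSpace l)
  <-> filterlim f F (@locally (AbsRing_UniformSpace C_AbsRing) l).
Proof. by split=> lim_f P /locally_C; apply: lim_f. Qed.

HB.instance Definition _ := Choice.on C.

Lemma Cplus_opp_l (x : C) : Cplus (Copp x) x = 0.
Proof. by rewrite Cplus_comm Cplus_opp_r. Qed.

HB.instance Definition _ :=
  GRing.isZmodule.Build C Cplus_assoc Cplus_comm Cplus_0_l Cplus_opp_l.

Lemma C1_neq0 : RtoC 1 != RtoC 0.
Proof. by apply/eqP => -[]; exact: R1_neq_R0. Qed.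

HB.instance Definition _ := GRing.Zmodule_isComNzRing.Build C
  Cmult_assoc Cmult_comm Cmult_1_l Cmult_plus_distr_r C1_neq0.

Import Order.TTheory GRing.Theory.
Local Open Scope ring_scope.

Lemma CmultE (x y : C) : Cmult x y = x * y.
Proof. by []. Qed.

Lemma big_pred1_seq (T : nmodType) (I : eqType) (r : seq I) (k : I) (F : I -> T) :
  uniq r -> \sum_(i <- r) (if i == k then F i else 0) = if k \in r then F k else 0.
Proof.
move=> r_uniq; rewrite -big_mkcond; case: ifP => kr.
  by rewrite -big_filter (filter_pred1_uniq r_uniq kr) big_seq1.
rewrite big_seq_cond big_pred0 // => i.
by apply/negbTE/andP => -[ir /eqP ik]; rewrite -ik ir in kr.
Qed.

Definition dconv {T : pzSemiRingType} (a b : nat -> T) (n : nat) : T :=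
  \sum_(d <- divisors n) a d * b (n %/ d)%N.

Lemma perm_divisors_index_iota n N : (0 < n <= N)%N ->
  perm_eq (divisors n) [seq d <- index_iota 1 N.+1 | (d %| n)%N].
Proof.
case/andP=> n0 nN; apply: uniq_perm; first exact: divisors_uniq.
  exact/filter_uniq/iota_uniq.
move=> d; rewrite mem_filter mem_index_iota -dvdn_divisors //.
case dn: (d %| n)%N => //=.
by rewrite (dvdn_gt0 n0 dn) ltnS (leq_trans (dvdn_leq n0 dn) nN).
Qed.

Section DirichletConvolution.

Variable T : pzSemiRingType.
Implicit Types (a b : nat -> T) (F : nat -> T).

Lemma sum_mul_eq F d n N : (0 < d)%N -> (0 < n <= N)%N ->
  \sum_(1 <= e < N.+1) (if (d * e == n)%N then F e else 0)
  = if (d %| n)%N then F (n %/ d)%N else 0.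
Proof.
move=> d0 /andP[n0 nN]; case: ifP => dn; last first.
  rewrite big1 // => e _; case: eqP => // de.
  by move: dn; rewrite -de dvdn_mulr.
have mulE e : (d * e == n)%N = (e == n %/ d)%N.
  by apply/eqP/eqP => [<-|->]; [rewrite mulKn | rewrite mulnC divnK].
rewrite (eq_bigr (fun e => if e == (n %/ d)%N then F e else 0)) => [|e _]; last first.
  by rewrite mulE.
rewrite big_pred1_seq ?iota_uniq // mem_index_iota divn_gt0 // (dvdn_leq n0 dn) /=.
by rewrite ltnS (leq_trans (leq_div _ _) nN).
Qed.

Lemma sum_dconv a b N :
  \sum_(1 <= n < N.+1) dconv a b n
  = \sum_(1 <= d < N.+1) \sum_(1 <= e < N.+1 | (d * e <= N)%N) a d * b e.
Proof.
have dconvE n : (1 <= n < N.+1)%N -> dconv a b n =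
    \sum_(1 <= d < N.+1) \sum_(1 <= e < N.+1) (if (d * e == n)%N then a d * b e else 0).
  move=> nN; rewrite /dconv (perm_big _ (perm_divisors_index_iota n N nN)) big_filter.
  rewrite big_mkcond; apply: eq_big_nat => d /andP[d0 _].
  by rewrite (sum_mul_eq (fun e => a d * b e)).
rewrite (eq_big_nat _ _ dconvE) exchange_big; apply: eq_big_nat => d /andP[d0 _].
rewrite exchange_big [RHS]big_mkcond; apply: eq_big_nat => e /andP[e0 _].
rewrite (eq_bigr (fun n => if n == (d * e)%N then a d * b e else 0)) => [|n _].
  by rewrite big_pred1_seq ?iota_uniq // mem_index_iota muln_gt0 d0 e0.
by rewrite eq_sym.
Qed.

End DirichletConvolution.

Section DirichletEstimates.

Import Num.Theory.

Lemma Cmod_ge0 (z : C) : 0 <= Cmod z.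
Proof. exact/RleP/Cmod_ge_0. Qed.

Lemma Cmod_sum_le (I : Type) (r : seq I) (P : pred I) (F : I -> C) :
  Cmod (\sum_(i <- r | P i) F i) <= \sum_(i <- r | P i) Cmod (F i).
Proof.
elim: r => [|x r IH]; first by rewrite !big_nil Cmod_0.
rewrite !big_cons; case: (P x) => //.
by apply: le_trans (lerD (lexx _) IH); exact/RleP/Cmod_triangle.
Qed.

Variables a b : nat -> C.

Lemma sum_Cmod_dconv_le M :
  \sum_(1 <= n < M.+1) Cmod (dconv a b n)
  <= (\sum_(1 <= i < M.+1) Cmod (a i)) * (\sum_(1 <= i < M.+1) Cmod (b i)).
Proof.
apply: le_trans (_ : _ <= \sum_(1 <= n < M.+1) dconv (Cmod \o a) (Cmod \o b) n) _.
  apply: ler_sum => n _; apply: le_trans (Cmod_sum_le _ _ _ _) _.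
  by apply: ler_sum => d _; rewrite Cmod_mult; exact: lexx.
rewrite sum_dconv big_distrlr; apply: ler_sum => d _.
rewrite [X in _ <= X](bigID (fun e => (d * e <= M)%N)) /= lerDl.
by apply: sumr_ge0 => e _; rewrite mulr_ge0 ?Cmod_ge0.
Qed.

Lemma Cmod_sum_dconv_sub_mul_le M K : (K * K <= M)%N ->
  Cmod (\sum_(1 <= n < M.+1) dconv a b n
        - (\sum_(1 <= i < M.+1) a i) * (\sum_(1 <= i < M.+1) b i))%R
  <= (\sum_(1 <= i < M.+1) Cmod (a i)) * (\sum_(1 <= i < M.+1) Cmod (b i))
     - (\sum_(1 <= i < K.+1) Cmod (a i)) * (\sum_(1 <= i < K.+1) Cmod (b i)).
Proof.
move=> KKM.
have KM : (K.+1 <= M.+1)%N.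
  by rewrite ltnS (leq_trans _ KKM) //; case: K {KKM} => // K; rewrite leq_pmulr.
have widen (G : nat -> R) :
    \sum_(1 <= i < K.+1) G i = \sum_(1 <= i < M.+1) (if (i <= K)%N then G i else 0).
  by rewrite (big_nat_widen _ _ _ _ _ KM) big_mkcond.
rewrite [X in Cmod X](_ : _ =
    - \sum_(1 <= d < M.+1) \sum_(1 <= e < M.+1 | ~~ (d * e <= M)%N) a d * b e); last first.
  rewrite sum_dconv big_distrlr -sumrB -sumrN; apply: eq_bigr => d _.
  rewrite [\sum_(1 <= e < M.+1) _](bigID (fun e => (d * e <= M)%N)) /=.
  by rewrite opprD addrA subrr add0r.
rewrite Cmod_opp !widen !big_distrlr /=.
apply: le_trans (_ : _ <= \sum_(1 <= d < M.+1) \sum_(1 <= e < M.+1 | ~~ (d * e <= M)%N)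
                            Cmod (a d) * Cmod (b e)) _.
  apply: le_trans (Cmod_sum_le _ _ _ _) _; apply: ler_sum => d _.
  apply: le_trans (Cmod_sum_le _ _ _ _) _; apply: ler_sum => e _.
  by rewrite Cmod_mult; exact: lexx.
rewrite lerBrDr -big_split; apply: ler_sum => d _.
rewrite big_mkcond -big_split; apply: ler_sum => e _ /=.
have f0 : 0 <= Cmod (a d) * Cmod (b e) by rewrite mulr_ge0 ?Cmod_ge0.
case: (leqP d K) => dK; case: (leqP e K) => eK; rewrite /= ?mul0r ?mulr0 ?addr0.
- by rewrite (leq_trans (leq_mul dK eK) KKM) add0r.
all: by case: ifP => _; rewrite ?lexx.
Qed.

End DirichletEstimates.

Lemma sum_n_bigR (f : nat -> R) N : sum_n (fun n => f n.+1) N = \sum_(1 <= i < N.+2) f i.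
Proof.
elim: N => [|N IH]; first by rewrite sum_O big_nat1.
by rewrite sum_Sn IH [RHS]big_nat_recr.
Qed.

Lemma sum_n_bigC (f : nat -> C) N : sum_n (fun n => f n.+1) N = \sum_(1 <= i < N.+2) f i.
Proof.
elim: N => [|N IH]; first by rewrite sum_O big_nat1.
by rewrite sum_Sn IH [RHS]big_nat_recr.
Qed.

Section DirichletSeries.

Import Num.Theory.
Local Open Scope R_scope.

Variables (a b : nat -> C) (la lb : C).
Hypotheses (a_sum : is_series (fun n => a n.+1) la)
           (b_sum : is_series (fun n => b n.+1) lb)
           (a_abs : ex_series (fun n => Cmod (a n.+1)))
           (b_abs : ex_series (fun n => Cmod (b n.+1))).

Let nA := sum_n (fun n => Cmod (a n.+1)).
Let nB := sum_n (fun n => Cmod (b n.+1)).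

Let nA_le N : nA N <= Series (fun n => Cmod (a n.+1)).
Proof. by apply: sum_n_le_Series => // n; exact: Cmod_ge_0. Qed.

Let nB_le N : nB N <= Series (fun n => Cmod (b n.+1)).
Proof. by apply: sum_n_le_Series => // n; exact: Cmod_ge_0. Qed.

Let nA_ge0 N : 0 <= nA N.
Proof.
rewrite /nA (sum_n_bigR (Cmod \o a)); apply/RleP.
by apply: sumr_ge0 => i _; exact: Cmod_ge0.
Qed.

Let nB_ge0 N : 0 <= nB N.
Proof.
rewrite /nB (sum_n_bigR (Cmod \o b)); apply/RleP.
by apply: sumr_ge0 => i _; exact: Cmod_ge0.
Qed.

Lemma ex_series_Cmod_dconv : ex_series (fun n => Cmod (dconv a b n.+1)).
Proof.
apply: (ex_series_nonneg_bounded _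
         (Series (fun n => Cmod (a n.+1)) * Series (fun n => Cmod (b n.+1)))).
  by move=> n; exact: Cmod_ge_0.
move=> N; apply: Rle_trans (_ : _ <= nA N * nB N) _.
  rewrite /nA /nB (sum_n_bigR (Cmod \o dconv a b)) !(sum_n_bigR (Cmod \o _)).
  by apply/RleP; exact: sum_Cmod_dconv_le.
exact: Rmult_le_compat.
Qed.

Lemma is_series_dconv : is_series (fun n => dconv a b n.+1) (Cmult la lb).
Proof.
set err := fun N => minus (sum_n (fun n => dconv a b n.+1) N)
                          (mult (sum_n (fun n => a n.+1) N) (sum_n (fun n => b n.+1) N)).
have err_le N k : (k.+1 * k.+1 <= N.+1)%N ->
    Cmod (err N) <= nA N * nB N - nA k * nB k.
  move=> kN; rewrite /err /nA /nB !(sum_n_bigR (Cmod \o _)) !(sum_n_bigC _).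
  by apply/RleP; exact: Cmod_sum_dconv_sub_mul_le.
have err_lim : is_lim_seq (fun N => Cmod (err N)) 0.
  set SA := Series (fun n => Cmod (a n.+1)); set SB := Series (fun n => Cmod (b n.+1)).
  have lim_nAB : is_lim_seq (fun N => nA N * nB N) (SA * SB).
    exact: is_lim_seq_mult' (Series_correct _ a_abs) (Series_correct _ b_abs).
  apply/is_lim_seq_spec => eps; have [k Hk] := proj2 (is_lim_seq_spec _ _) lim_nAB eps.
  exists (k.+1 * k.+1)%N => N /ssrnat.leP kN.
  have nAB_le : nA N * nB N <= SA * SB by exact: Rmult_le_compat.
  have [_ close] := Rabs_def2 _ _ (Hk k (le_n k)).
  have := err_le N k (leqW kN).
  rewrite Rminus_0_r Rabs_pos_eq; [lra | exact: Cmod_ge_0].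
have prod_lim : filterlim (fun N => mult (sum_n (fun n => a n.+1) N)
                                         (sum_n (fun n => b n.+1) N))
                          eventually (locally (mult la lb)).
  apply/filterlim_C_AbsRing; apply: filterlim_comp_2 (filterlim_mult la lb).
  - exact/filterlim_C_AbsRing.
  - exact/filterlim_C_AbsRing.
have := filterlim_comp_2 _ _ _ (filterlim_norm_zero err err_lim) prod_lim
          (filterlim_plus zero (mult la lb)).
rewrite plus_zero_l => lim; eapply filterlim_ext; last exact: lim.
by move=> N; rewrite /err /minus -plus_assoc plus_opp_l plus_zero_r.
Qed.

End DirichletSeries.

Lemma ex_series_Cmod_cpow_nat t : Rlt 1 (Re t) ->
  ex_series (fun n => Cmod (cpow_nat n.+1 (Copp t))).
Proof.
move=> t1; apply: ex_series_ext (ex_series_Rpower_nat _ t1) => n.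
by rewrite Cmod_cpow_nat.
Qed.

Lemma is_series_zeta t : Rlt 1 (Re t) ->
  is_series (fun n => cpow_nat n.+1 (Copp t)) (zeta t).
Proof.
move=> t1; have [l sum_l] : ex_series (fun n => cpow_nat n.+1 (Copp t)).
  by apply: ex_series_le (ex_series_Cmod_cpow_nat _ t1) => n; exact: Rle_refl.
have [sum_Re sum_Im] := is_series_Re_Im _ _ sum_l.
rewrite /zeta (is_series_unique _ _ sum_Re) (is_series_unique _ _ sum_Im).
by case: l sum_l {sum_Re sum_Im}.
Qed.

Lemma Zchain_S m N s :
  Zchain m.+1 N s = \sum_(d <- divisors N) cpow_nat d (Copp s) * Zchain m d s.
Proof.
rewrite /=; elim: (divisors N) => [|d r IH] /=; first by rewrite big_nil.
by rewrite big_cons IH.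
Qed.

Lemma zeta_m_term_S m s t n :
  zeta_m_term m.+1 s t n
  = dconv (fun d => Zchain m d s * cpow_nat d (Copp (Cplus s t)))
          (fun e => cpow_nat e (Copp t)) n.+1.
Proof.
rewrite /zeta_m_term Zchain_S /dconv CmultE big_distrl /=.
apply: eq_big_seq => d; rewrite -dvdn_divisors // => dn.
have d0 : (0 < d)%N := dvdn_gt0 (ltn0Sn n) dn.
have q0 : (0 < n.+1 %/ d)%N by rewrite divn_gt0 // dvdn_leq.
rewrite -{1}(divnK dn) mulnC cpow_natM // Copp_plus_distr cpow_natD !CmultE.
by rewrite !mulrA [cpow_nat d _ * Zchain m d s]mulrC.
Qed.

Lemma zeta_m_term_0 s t n : zeta_m_term 0 s t n = cpow_nat n.+1 (Copp t).
Proof. exact: Cmult_1_l. Qed.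

Lemma Cplus_Cmult_INR0 s t : Cplus (Cmult s (RtoC (INR 0))) t = t.
Proof. by case: s t => [s1 s2] [t1 t2]; rewrite /Cplus /Cmult /RtoC /=; f_equal; ring. Qed.

Lemma Cplus_Cmult_INR_succ s t k :
  Cplus (Cmult s (RtoC (INR k.+1))) t = Cplus (Cmult s (RtoC (INR k))) (Cplus s t).
Proof.
by case: s t => [s1 s2] [t1 t2]; rewrite S_INR /Cplus /Cmult /RtoC /=; f_equal; ring.
Qed.

Lemma zeta_prod_0 s t : zeta_prod 0 s t = zeta t.
Proof. by rewrite /zeta_prod /= Cmult_1_r Cplus_Cmult_INR0. Qed.

Lemma zeta_prod_S m s t :
  zeta_prod m.+1 s t = Cmult (zeta t) (zeta_prod m s (Cplus s t)).
Proof.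
have shift j n :
    foldr (fun k acc => Cmult (zeta (Cplus (Cmult s (RtoC (INR k))) t)) acc)
          (RtoC 1) (iota j.+1 n)
    = foldr (fun k acc => Cmult (zeta (Cplus (Cmult s (RtoC (INR k))) (Cplus s t))) acc)
            (RtoC 1) (iota j n).
  by elim: n j => [|n IH] j //=; rewrite IH Cplus_Cmult_INR_succ.
rewrite /zeta_prod; change (iota 0 m.+2) with (0%N :: iota 1 m.+1); cbn [foldr].
by rewrite shift Cplus_Cmult_INR0.
Qed.

Lemma is_series_zeta_m m s t : Rlt 0 (Re s) -> Rlt 1 (Re t) ->
  is_series (zeta_m_term m s t) (zeta_prod m s t)
  /\ ex_series (fun n => Cmod (zeta_m_term m s t n)).
Proof.
move=> s0; elim: m t => [|m IH] t t1.
  rewrite zeta_prod_0; split.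
  - by apply: is_series_ext (is_series_zeta _ t1) => n; rewrite zeta_m_term_0.
  - by apply: ex_series_ext (ex_series_Cmod_cpow_nat _ t1) => n; rewrite zeta_m_term_0.
have st1 : Rlt 1 (Re (Cplus s t)) by change (Rlt 1 (Rplus (Re s) (Re t))); lra.
have [sum_st abs_st] := IH _ st1.
set a := fun d => Zchain m d s * cpow_nat d (Copp (Cplus s t)).
set b := fun e => cpow_nat e (Copp t).
have [sum_t abs_t] := (is_series_zeta _ t1, ex_series_Cmod_cpow_nat _ t1).
rewrite zeta_prod_S Cmult_comm; split.
- apply: is_series_ext (@is_series_dconv a b _ _ sum_st sum_t abs_st abs_t) => n.
  by rewrite zeta_m_term_S.
- apply: ex_series_ext (@ex_series_Cmod_dconv a b abs_st abs_t) => n.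
  by rewrite zeta_m_term_S.
Qed.

(* The product formula also holds for [m = 0]. *)
Theorem mainTheorem5 (m : nat) (s t : C) :
  (0 < m)%nat -> Rlt 0 (Re s) -> Rlt 1 (Re t) ->
  is_series (zeta_m_term m s t) (zeta_prod m s t).
Proof. by move=> _ s0 t1; case: (is_series_zeta_m m _ _ s0 t1). Qed.
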